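(* For any labeled test set $S_{\mathrm{test}} \subseteq \{\pm1\}^n\times\{\pm1\}$, depth $d \ge 0$, mapping $\mathcal{H}$ from restrictions to hypotheses, and restriction $\rho$, the procedure $\mathrm{FindTree}(S_{\mathrm{test}}, d, \mathcal{H}, \rho)$ returns a depth-$d$ tree $T$ satisfying \[ \mathrm{error}(T \circ_\rho \mathcal{H}, (S_{\mathrm{test}})_\rho) = \min_{T' \text{ a depth-}d\text{ decision tree}} \mathrm{error}(T' \circ_\rho \mathcal{H}, (S_{\mathrm{test}})_\rho), \] where the minimum ranges over depth-$d$ decision trees querying only coordinates $i$ with $\rho_i=\star$.
   Context: A restriction is $\rho\in\{\pm1,\star\}^n$; $x\in\rho$ means $x_i=\rho_i$ or $\rho_i=\star$ for all $i$; $\rho\cap(x_i=b)$ is $\rho$ with coordinate $i$ (previously $\star$) set to $b$; for two restrictions fixing disjoint coordinate sets, $\rho\cap\ell$ fixes both sets of coordinates. For a labeled set $S$, $S_\rho=\{(x,y)\in S:x\in\rho\}$, and $\mathrm{error}(h,S)$ is the fraction of $(x,y)\in S$ with $h(x)\ne y$. A depth-$d$ decision tree is a set of $2^d$ leaf restrictions defined recursively: depth $0$ is the single all-$\star$ restriction; depth $d\ge1$ has a root coordinate $i$ and two depth-$(d-1)$ subtrees not fixing $i$, whose leaves get coordinate $i$ set to $-1$ and $+1$ respectively. For a tree $T$ querying only coordinates free in $\rho$, $T\circ_\rho\mathcal{H}$ maps $x\in\rho$ to $\mathcal{H}(\rho\cap\ell)(x)$, where $\ell$ is the leaf of $T$ with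 $x\in\ell$. Procedure $\mathrm{FindTree}(S_{\mathrm{test}},d,\mathcal{H},\rho)$: if $d=0$ return the one-leaf tree; otherwise for each $i$ with $\rho_i=\star$, recursively compute $T_{+1}\leftarrow\mathrm{FindTree}(S_{\mathrm{test}},d-1,\mathcal{H},\rho\cap(x_i=1))$ and $T_{-1}\leftarrow\mathrm{FindTree}(S_{\mathrm{test}},d-1,\mathcal{H},\rho\cap(x_i=-1))$, let $T^{(i)}$ be the tree with root $x_i$ and subtrees $T_{-1}$, $T_{+1}$, and return the $T^{(i)}$ minimizing $\mathrm{error}(T^{(i)}\circ_\rho\mathcal{H},(S_{\mathrm{test}})_\rho)$. *)

(* Encoding: the value +1 is [true], -1 is [false];
   the restriction value "star" is [None]. *)
From mathcomp Require Import all_boot all_order all_algebra.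
Set Implicit Arguments. Unset Strict Implicit. Unset Printing Implicit Defensive.
Import Order.TTheory GRing.Theory Num.Theory.
Local Open Scope ring_scope.

Definition pt (n : nat) := {ffun 'I_n -> bool}.
Definition rst (n : nat) := {ffun 'I_n -> option bool}.

Definition rstar (n : nat) : rst n := [ffun=> None].

Definition inr (n : nat) (x : pt n) (rho : rst n) : bool :=
  [forall i, if rho i is Some b then x i == b else true].

Definition rset (n : nat) (rho : rst n) (i : 'I_n) (b : bool) : rst n :=
  [ffun j => if j == i then Some b else rho j].

(* rho ∩ l, for restrictions fixing disjoint coordinate sets *)
Definition rcap (n : nat) (rho l : rst n) : rst n :=
  [ffun j => if rho j is Some b then Some b else l j].

Definition sample (n : nat) := {set (pt n * bool)}.

Definition restr_sample (n : nat) (S : sample n) (rho : rst n) : sample n :=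
  [set p in S | inr p.1 rho].

Definition error (n : nat) (h : pt n -> bool) (S : sample n) : rat :=
  #|[set p in S | h p.1 != p.2]|%:R / #|S|%:R.

(* decision trees: [Node i Tm Tp] has root x_i, subtree Tm for x_i = -1
   and Tp for x_i = +1 *)
Inductive dtree (n : nat) : Type :=
| Leaf
| Node of 'I_n & dtree n & dtree n.
Arguments Leaf {n}.

Fixpoint leaves (n : nat) (T : dtree n) : seq (rst n) :=
  match T with
  | Leaf => [:: rstar n]
  | Node i Tm Tp =>
      map (fun l => rset l i false) (leaves Tm) ++
      map (fun l => rset l i true) (leaves Tp)
  end.

Fixpoint queries (n : nat) (T : dtree n) : seq 'I_n :=
  match T with
  | Leaf => [::]
  | Node i Tm Tp => i :: queries Tm ++ queries Tp
  end.

Fixpoint is_tree (n : nat) (d : nat) (T : dtree n) : bool :=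
  match T, d with
  | Leaf, 0 => true
  | Node i Tm Tp, d'.+1 =>
      [&& is_tree d' Tm, is_tree d' Tp, i \notin queries Tm & i \notin queries Tp]
  | _, _ => false
  end.

Definition free_in (n : nat) (rho : rst n) (T : dtree n) : bool :=
  all (fun i => rho i == None) (queries T).

Definition compose (n : nat) (rho : rst n) (T : dtree n)
    (H : rst n -> pt n -> bool) (x : pt n) : bool :=
  let l := head (rstar n) [seq l <- leaves T | inr x l] in
  H (rcap rho l) x.

Definition argmin (A : Type) (f : A -> rat) (s : seq A) : option A :=
  foldr (fun t acc => match acc with
                      | None => Some t
                      | Some u => if f t <= f u then Some t else Some u
                      end) None s.

(* FindTree(S_test, d, H, rho); returns None only when no candidate tree
   exists (no free coordinate at some recursive call). *)
Fixpoint FindTree (n : nat) (S : sample n) (d : nat)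
    (H : rst n -> pt n -> bool) (rho : rst n) : option (dtree n) :=
  match d with
  | 0 => Some Leaf
  | d'.+1 =>
      let cands :=
        pmap (fun i =>
                if rho i is None then
                  match FindTree S d' H (rset rho i true),
                        FindTree S d' H (rset rho i false) with
                  | Some Tp, Some Tm => Some (Node i Tm Tp)
                  | _, _ => None
                  end
                else None) (enum 'I_n) in
      argmin (fun T => error (compose rho T H) (restr_sample S rho)) cands
  end.

From mathcomp Require Import all_boot all_order all_algebra.
From Stdlib Require List Btauto.
Import Order.TTheory GRing.Theory Num.Theory.
Local Open Scope ring_scope.
Set Implicit Arguments. Unset Strict Implicit.

(* A tree with root x_i classifies the points of S_rho with x_i = b exactly
   as its b-subtree does relative to rho ∩ (x_i = b).  Hence its number of
   mistakes on S_rho is the sum of those of its subtrees on the two halves,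
   and for a fixed free root the best depth-(d+1) tree combines two optimal
   depth-d subtrees; these are what FindTree computes recursively, so
   minimizing over the root yields an optimal tree.  The hypothesis that d
   coordinates are free guarantees a candidate root at every recursive call. *)

Lemma inr_rset n (x : pt n) (r : rst n) i b :
  r i = None -> inr x (rset r i b) = (x i == b) && inr x r.
Proof.
move=> ri; apply/forallP/andP => [Hx | [xb /forallP Hx] j].
- split; first by have := Hx i; rewrite ffunE eqxx.
  apply/forallP => j; have := Hx j; rewrite ffunE.
  by case: eqVneq => [->|_] //; rewrite ri.
- by rewrite ffunE; case: eqVneq => [->|_] //; apply: Hx.
Qed.

Lemma inr_rset_intro n (x : pt n) (r : rst n) i b :
  inr x r -> x i = b -> inr x (rset r i b).
Proof.
move=> /forallP Hx xb; apply/forallP => j.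
by rewrite ffunE; case: eqVneq => [->|_]; [rewrite xb | apply: Hx].
Qed.

Lemma leaves_cover n (T : dtree n) (x : pt n) : has (inr x) (leaves T).
Proof.
elim: T => [|i Tm IHm Tp IHp] /=.
  by rewrite orbF; apply/forallP => j; rewrite ffunE.
rewrite has_cat !has_map; case xi: (x i); apply/orP; [right|left].
- by apply: sub_has IHp => l xl; apply: inr_rset_intro.
- by apply: sub_has IHm => l xl; apply: inr_rset_intro.
Qed.

Lemma leaves_unfixed n (T : dtree n) l j :
  l \in leaves T -> j \notin queries T -> l j = None.
Proof.
elim: T l => [|i Tm IHm Tp IHp] l /=.
  by rewrite mem_seq1 => /eqP -> _; rewrite ffunE.
rewrite mem_cat in_cons mem_cat !negb_or => /orP[] /mapP[l' l'T ->] /and3P[ji jm jp];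
  rewrite ffunE (negbTE ji); [exact: IHm | exact: IHp].
Qed.

Definition leaf_of n (T : dtree n) (x : pt n) : rst n :=
  head (rstar n) [seq l <- leaves T | inr x l].

Lemma leaf_of_node n i (Tm Tp : dtree n) (x : pt n) :
  i \notin queries Tm -> i \notin queries Tp ->
  leaf_of (Node i Tm Tp) x = rset (leaf_of (if x i then Tp else Tm) x) i (x i).
Proof.
move=> qm qp; rewrite /leaf_of /= filter_cat !filter_map.
have branch b (T : dtree n) : i \notin queries T ->
    [seq l <- leaves T | preim (fun l => rset l i b) (inr x) l] =
    if x i == b then [seq l <- leaves T | inr x l] else [::].
  move=> qT; rewrite (@eq_in_filter _ _ (fun l => (x i == b) && inr x l)).
    by case: eqP => _ //; elim: (leaves T).
  by move=> l lT /=; rewrite inr_rset // (leaves_unfixed lT qT).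
have := leaves_cover (if x i then Tp else Tm) x; rewrite has_filter.
by rewrite !branch //; case: (x i) => /=; rewrite ?cats0; case: filter.
Qed.

Lemma rcap_rset n (rho l : rst n) i b :
  rho i = None -> rcap rho (rset l i b) = rcap (rset rho i b) l.
Proof.
move=> ri; apply/ffunP => j; rewrite !ffunE.
by case: eqVneq => [->|ji]; rewrite ?ri.
Qed.

Lemma compose_node n (rho : rst n) i Tm Tp H (x : pt n) :
  rho i = None -> i \notin queries Tm -> i \notin queries Tp ->
  compose rho (Node i Tm Tp) H x =
  compose (rset rho i (x i)) (if x i then Tp else Tm) H x.
Proof.
by move=> ri qm qp; rewrite /compose -!/(leaf_of _ x) leaf_of_node // rcap_rset.
Qed.

Definition mistakes n (h : pt n -> bool) (S : sample n) : nat :=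
  #|[set p in S | h p.1 != p.2]|.

Lemma ler_error n (h1 h2 : pt n -> bool) (S : sample n) :
  (error h1 S <= error h2 S) = (mistakes h1 S <= mistakes h2 S)%N.
Proof.
rewrite /error -/(mistakes h1 S) -/(mistakes h2 S).
have [S0|S_gt0] := posnP #|S|; last by rewrite ler_pM2r ?invr_gt0 ?ltr0n // ler_nat.
have mistakes0 h : mistakes h S = 0%N.
  apply/eqP; rewrite -leqn0 -S0 subset_leq_card //.
  by apply/subsetP => p; rewrite inE => /andP[].
by rewrite !mistakes0 lexx.
Qed.

Definition nfree n (rho : rst n) : nat := #|[set j : 'I_n | rho j == None]|.

Lemma nfree_rset n (rho : rst n) i b :
  rho i = None -> nfree rho = (nfree (rset rho i b)).+1.
Proof.
move=> ri; rewrite /nfree (cardsD1 i) inE ri eqxx add1n.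
congr _.+1; apply: eq_card => j; rewrite !inE ffunE.
by case: eqVneq => [->|_]; rewrite ?ri.
Qed.

Lemma free_in_rset n (rho : rst n) i b (T : dtree n) :
  rho i = None -> free_in (rset rho i b) T = free_in rho T && (i \notin queries T).
Proof.
move=> ri; rewrite /free_in; elim: (queries T) => [//|j q IH] /=.
rewrite IH ffunE in_cons; case: (eqVneq j i) => [->|_]; first by rewrite ri andbF.
by rewrite andbA.
Qed.

Lemma free_in_rset_notin n (rho : rst n) i b (T : dtree n) :
  free_in (rset rho i b) T -> i \notin queries T.
Proof. by apply: contraL => iq; apply/allPn; exists i; rewrite // ffunE eqxx. Qed.

Definition tree_over n (d : nat) (rho : rst n) (T : dtree n) : bool :=
  is_tree d T && free_in rho T.

Lemma tree_over_node n d (rho : rst n) i (Tm Tp : dtree n) :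
  rho i = None ->
  tree_over d.+1 rho (Node i Tm Tp) =
  tree_over d (rset rho i false) Tm && tree_over d (rset rho i true) Tp.
Proof.
move=> ri; rewrite /tree_over /= !free_in_rset // [free_in rho _]/free_in /=.
rewrite ri eqxx all_cat -/(free_in rho Tm) -/(free_in rho Tp).
by Btauto.btauto.
Qed.

Lemma argminP (A : Type) (f : A -> rat) (s : seq A) : s <> [::] ->
  exists t, [/\ argmin f s = Some t, List.In t s & forall u, List.In u s -> f t <= f u].
Proof.
elim: s => // a [|b s] IH _.
  by exists a; split=> [||u [<-|]] //; left.
have [//|t [/= -> ts tmin]] := IH.
have [at_le|ta_lt] := leP (f a) (f t).
- exists a; split=> [||u [<-|/tmin]] //; first by left.
  exact: le_trans at_le.
- exists t; split=> [||u [<-|/tmin]] //; first by right.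
  exact: ltW.
Qed.

Lemma In_pmap (I : eqType) (A : Type) (g : I -> option A) (s : seq I) u :
  List.In u (pmap g s) <-> exists2 i, i \in s & g i = Some u.
Proof.
elim: s => [|i s IH] /=; first by split=> // -[].
case gi: (g i) => [v|] /=; split.
- case=> [<- | /IH[j js gj]]; first by exists i; rewrite ?mem_head.
  by exists j; rewrite // inE js orbT.
- case=> j; rewrite inE => /orP[/eqP-> | js] gj; first by left; congruence.
  by right; apply/IH; exists j.
- by case/IH=> j js gj; exists j; rewrite // inE js orbT.
- case=> j; rewrite inE => /orP[/eqP-> | js] gj; first by congruence.
  by apply/IH; exists j.
Qed.

Section FindTreeOptimal.

Variables (n : nat) (S : sample n) (H : rst n -> pt n -> bool).

Definition tree_error (rho : rst n) (T : dtree n) : rat :=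
  error (compose rho T H) (restr_sample S rho).

Definition tree_mistakes (rho : rst n) (T : dtree n) : nat :=
  mistakes (compose rho T H) (restr_sample S rho).

Definition optimal (d : nat) (rho : rst n) (T : dtree n) : Prop :=
  tree_over d rho T /\
  forall T', tree_over d rho T' -> tree_error rho T <= tree_error rho T'.

Lemma tree_mistakes_node (rho : rst n) (i : 'I_n) (Tm Tp : dtree n) :
  rho i = None -> i \notin queries Tm -> i \notin queries Tp ->
  tree_mistakes rho (Node i Tm Tp) =
  (tree_mistakes (rset rho i false) Tm + tree_mistakes (rset rho i true) Tp)%N.
Proof.
move=> ri qm qp; rewrite /tree_mistakes /mistakes.
rewrite -(cardsID [set p : pt n * bool | p.1 i]) addnC.
congr (_ + _)%N; apply: eq_card => p; rewrite !inE inr_rset // compose_node //;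
  by case: (p.1 i); rewrite /= ?andbF ?andbT.
Qed.

Lemma node_error_le d (rho : rst n) (i : 'I_n) (Tm Tp Tm' Tp' : dtree n) :
  rho i = None -> optimal d (rset rho i false) Tm -> optimal d (rset rho i true) Tp ->
  tree_over d.+1 rho (Node i Tm' Tp') ->
  tree_error rho (Node i Tm Tp) <= tree_error rho (Node i Tm' Tp').
Proof.
move=> ri [/andP[_ fm] optm] [/andP[_ fp] optp].
rewrite tree_over_node // => /andP[over_m over_p].
have [/andP[_ fm'] /andP[_ fp']] := (over_m, over_p).
rewrite /tree_error !ler_error -!/(tree_mistakes _ _) !tree_mistakes_node //;
  try by [exact: free_in_rset_notin fm | exact: free_in_rset_notin fp
         | exact: free_in_rset_notin fm' | exact: free_in_rset_notin fp'].
by apply: leq_add; rewrite -ler_error; [apply: optm | apply: optp].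
Qed.

Lemma FindTree_optimal d (rho : rst n) :
  (d <= nfree rho)%N -> exists2 T, FindTree S d H rho = Some T & optimal d rho T.
Proof.
elim: d rho => [|d IH] rho d_le.
  by exists Leaf => //; split=> // -[] // _; rewrite lexx.
have sub i b : rho i = None ->
    exists2 T, FindTree S d H (rset rho i b) = Some T & optimal d (rset rho i b) T.
  by move=> ri; apply: IH; rewrite -ltnS -(nfree_rset b ri).
rewrite /=; set g := fun i : 'I_n => _.
have candP i t : g i = Some t -> exists Tm Tp,
    [/\ t = Node i Tm Tp, rho i = None,
        optimal d (rset rho i false) Tm & optimal d (rset rho i true) Tp].
  rewrite /g; case ri: (rho i) => [//|].
  have [[Tm -> optm] [Tp -> optp]] := (sub i false ri, sub i true ri).
  by case=> <-; exists Tm, Tp.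
have cand_free i : rho i = None -> exists t, g i = Some t.
  move=> ri; rewrite /g ri.
  have [[Tm -> _] [Tp -> _]] := (sub i false ri, sub i true ri).
  by exists (Node i Tm Tp).
have cands_in j u : g j = Some u -> List.In u (pmap g (enum 'I_n)).
  by move=> gj; apply/In_pmap; exists j; rewrite ?mem_enum.
have [i0 ri0] : exists i0, rho i0 = None.
  by case/card_gt0P: (leq_trans (ltn0Sn d) d_le) => i; rewrite inE => /eqP; exists i.
have [t0 g_i0] := cand_free i0 ri0.
have [|t [-> /In_pmap[i _ /candP[Tm [Tp [-> ri optm optp]]]] tmin]] := argminP
    (tree_error rho) (s := pmap g (enum 'I_n)).
  by move=> cands0; move: (cands_in _ _ g_i0); rewrite cands0.
exists (Node i Tm Tp) => //; split; first by rewrite tree_over_node // optm.1 optp.1.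
case=> [//|j Tm' Tp'] over'.
have /eqP rj : rho j == None by case/andP: over' => _ /andP[].
have [u gj] := cand_free j rj; have [Fm [Fp [u_def _ optFm optFp]]] := candP j u gj.
apply: le_trans (tmin u (cands_in _ _ gj)) _; rewrite u_def.
exact: node_error_le optFm optFp over'.
Qed.

End FindTreeOptimal.

Theorem claim6p5 (n : nat) (S : sample n) (d : nat)
    (H : rst n -> pt n -> bool) (rho : rst n) :
  (d <= #|[set i : 'I_n | rho i == None]|)%N ->
  exists T : dtree n,
    [/\ FindTree S d H rho = Some T,
        is_tree d T, free_in rho T &
        forall T' : dtree n, is_tree d T' -> free_in rho T' ->
          error (compose rho T H) (restr_sample S rho)
          <= error (compose rho T' H) (restr_sample S rho)].
Proof.
move=> d_le; have [T FT [/andP[treeT freeT] Tmin]] := FindTree_optimal S H d_le.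
by exists T; split=> // T' treeT' freeT'; apply: Tmin; apply/andP.
Qed.
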